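(* Let $g\ge1$, $n=g+1$, $B\in\mathbb Z^{g\times n}$ with $B_{i,1}=1$, $B_{i,i+1}=-1$ and other entries $0$, $Q=BB^T$, and let $k\in\{1,\dots,g\}$ and $\mathbf a\in[\mathbf k]$. Then the Delaunay set $\mathcal D_{\mathbf a,Q}$ is in bijection with the set $[\mathbf k]$ and with the set $\mathcal B_{\mathbf a,v_1}$ of bases of the matroid $\mathcal M_{\mathbf a,v_1}$.
   Context: $V_Q=\{\mathbf a\in\mathbb R^g:\ \mathbf a^TQ\mathbf a\le(\mathbf a-\mathbf c)^TQ(\mathbf a-\mathbf c)\ \forall\mathbf c\in\mathbb Z^g\}$ is the Voronoi polytope of the genus-$g$ banana graph (two vertices $v_1,v_2$ joined by $n$ edges). $[\mathbf k]\subset\mathbb R^g$ is the set of vectors with entries in $\{-\tfrac{k}{g+1},\tfrac{g+1-k}{g+1}\}$ having $k$ or $k-1$ entries equal to $\tfrac{g+1-k}{g+1}$ (these are vertices of $V_Q$). $\mathcal D_{\mathbf a,Q}=\{\mathbf c\in\mathbb Z^g:\mathbf a^TQ\mathbf a=(\mathbf a-\mathbf c)^TQ(\mathbf a-\mathbf c)\}$. Let $\mathbf s_{\mathbf a}\in\{0,1\}^n$ have $j$-th entry $0$ if $(B^T\mathbf a)_j>0$ and $1$ if $(B^T\mathbf a)_j<0$. The matroid $\mathcal M_{\mathbf a,v_1}$ on ground set $[n]$ has bases $\mathcal B_{\mathbf a,v_1}=\{I\subset[n],|I|=k:\ \exists\mathbf c\in\mathcal D_{\mathbf a,Q}\text{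 with }(B^T\mathbf c+\mathbf s_{\mathbf a})_i=1\ \forall i\in I\}$. *)

From HB Require Import structures.
From mathcomp Require Import all_boot all_order all_algebra.
Set Implicit Arguments. Unset Strict Implicit. Unset Printing Implicit Defensive.
Import Order.TTheory GRing.Theory Num.Theory.
Local Open Scope ring_scope.

(* Incidence-type matrix B of the genus-g banana graph, n = g+1 edges.
   0-indexed: B i 0 = 1, B i (i+1) = -1, other entries 0. *)
Definition bananaB (g : nat) : 'M[int]_(g, g.+1) :=
  \matrix_(i < g, j < g.+1)
    (if j == 0%N :> nat then 1 else if j == i.+1 :> nat then -1 else 0).

Definition bananaQ (g : nat) : 'M[rat]_g :=
  map_mx intr (bananaB g *m (bananaB g)^T).

Definition qform (g : nat) (Q : 'M[rat]_g) (x : 'cV[rat]_g) : rat :=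
  (x^T *m Q *m x) 0 0.

Definition in_bracket (g k : nat) (a : 'cV[rat]_g) : Prop :=
  (forall i, a i 0 = - (k%:R / g.+1%:R) \/ a i 0 = ((g.+1 - k)%:R / g.+1%:R))
  /\ (let m := #|[set i : 'I_g | a i 0 == (g.+1 - k)%:R / g.+1%:R]| in
      m = k \/ m = k.-1).

Definition in_delaunay (g : nat) (Q : 'M[rat]_g) (a : 'cV[rat]_g)
    (c : 'cV[int]_g) : Prop :=
  qform Q a = qform Q (a - map_mx intr c).

(* sign vector s_a in {0,1}^n: 0 if (B^T a)_j > 0, 1 if (B^T a)_j < 0
   (for a in [k] the entries of B^T a are never 0). *)
Definition svec (g : nat) (a : 'cV[rat]_g) (j : 'I_g.+1) : int :=
  if 0 < ((map_mx intr (bananaB g))^T *m a) j 0 then 0 else 1.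

Definition is_basis (g k : nat) (a : 'cV[rat]_g) (I : {set 'I_g.+1}) : Prop :=
  #|I| = k /\
  exists c : 'cV[int]_g, in_delaunay (bananaQ g) a c /\
    forall i, i \in I -> ((bananaB g)^T *m c) i 0 + svec a i = 1.

From HB Require Import structures.
From mathcomp Require Import all_boot all_order all_algebra.
From mathcomp Require Import zify ring lra.
From Stdlib Require Import ClassicalEpsilon ProofIrrelevance.

(* Since Q = B B^T, the form is x^T Q x = |B^T x|^2.  The columns of B^T sum to
   zero, so [edge_weight] w(x) = K 1 - B^T x with K = k/(g+1) has coordinate sum k and
   x^T Q x = |w(x)|^2 - k K; moreover [k] is exactly the set of x with
   w(x) in {0,1}^(g+1).  For a in [k] and c in Z^g, w(a - c) = B^T c + s_a is an
   integer vector of sum k, so |w(a - c)|^2 >= k = |w(a)|^2 with equality iff it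
   is a 0/1 vector.  Hence c is in D_{a,Q} iff a - c is in [k], and both
   c |-> a - c and c |-> supp (B^T c + s_a) are bijections. *)

Set Implicit Arguments. Unset Strict Implicit. Unset Printing Implicit Defensive.
Import Order.TTheory GRing.Theory Num.Theory.
Local Open Scope ring_scope.

Lemma sval_inj (A : Type) (P : A -> Prop) : injective (@sval A P).
Proof. exact: eq_sig_hprop (fun _ _ _ => proof_irrelevance _ _ _). Qed.

Lemma bijective_of_inj_surj (A B : Type) (f : A -> B) :
  injective f -> (forall b, exists a, f a = b) -> bijective f.
Proof.
move=> f_inj f_surj.
pose finv b := proj1_sig (constructive_indefinite_description _ (f_surj b)).
have finvK b : f (finv b) = b by rewrite /finv; case: constructive_indefinite_description.
by exists finv => [a|b]; [apply: f_inj|].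
Qed.

Lemma sum_sqr_eq_sum_01 (I : finType) (v : I -> int) :
  \sum_i v i ^+ 2 = \sum_i v i -> forall i, v i = 0 \/ v i = 1.
Proof.
move=> sum_eq i.
have ge0 j : 0 <= v j * (v j - 1) by nia.
have : \sum_j v j * (v j - 1) = 0.
  by under eq_bigr do rewrite mulrBr mulr1 -expr2; rewrite sumrB sum_eq subrr.
move/psumr_eq0P => /(_ (fun j _ => ge0 j) i isT) /eqP.
by rewrite mulf_eq0 subr_eq0 => /orP[] /eqP; [left | right].
Qed.

Lemma card_set_eq1 (R : nzSemiRingType) (I : finType) (v : I -> R) :
  (forall i, v i = 0 \/ v i = 1) -> #|[set i | v i == 1]|%:R = \sum_i v i.
Proof.
move=> v01; rewrite -sum1_card natr_sum [LHS]big_mkcond /=.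
by apply: eq_bigr => i _; rewrite inE; case: (v01 i) => ->; rewrite ?eqxx // eq_sym oner_eq0.
Qed.

Section BananaGraph.

Variable g : nat.

Local Notation BT x := ((map_mx intr (bananaB g))^T *m x).

Lemma bananaBT_mul0 (R : pzRingType) (x : 'cV[R]_g) : (BT x) ord0 0 = \sum_i x i 0.
Proof. by rewrite mxE; apply: eq_bigr => i _; rewrite !mxE /= mul1r. Qed.

Lemma bananaBT_mul_lift (R : pzRingType) (x : 'cV[R]_g) i :
  (BT x) (lift ord0 i) 0 = - x i 0.
Proof.
rewrite mxE (bigD1 i) //= !mxE /= /bump /= add1n eqxx mulN1r big1 ?addr0 // => l ln.
rewrite !mxE /= /bump /= add1n eqSS (_ : (i == l :> nat) = false) ?mul0r //.
by rewrite eq_sym; exact: negbTE ln.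
Qed.

Lemma sum_bananaBT_mul (R : pzRingType) (x : 'cV[R]_g) : \sum_j (BT x) j 0 = 0.
Proof.
rewrite big_ord_recl bananaBT_mul0.
by rewrite (eq_bigr _ (fun i _ => bananaBT_mul_lift x i)) sumrN subrr.
Qed.

Lemma map_bananaB_int : map_mx intr (bananaB g) = bananaB g.
Proof. by apply/matrixP => i j; rewrite mxE intz. Qed.

Lemma bananaQE : bananaQ g = map_mx intr (bananaB g) *m (map_mx intr (bananaB g))^T.
Proof. by rewrite /bananaQ map_mxM map_trmx. Qed.

Lemma qform_bananaQ (x : 'cV[rat]_g) : qform (bananaQ g) x = \sum_j (BT x) j 0 ^+ 2.
Proof.
rewrite /qform bananaQE mulmxA -mulmxA -[x^T *m _]trmxK trmx_mul trmxK.
by rewrite mxE; apply: eq_bigr => j _; rewrite mxE expr2.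
Qed.

Variable k : nat.

Local Notation K := (k%:R / g.+1%:R : rat).

Definition edge_weight (x : 'cV[rat]_g) (j : 'I_g.+1) : rat := K - (BT x) j 0.

Lemma edge_weight_lift x i : edge_weight x (lift ord0 i) = x i 0 + K.
Proof. by rewrite /edge_weight bananaBT_mul_lift opprK addrC. Qed.

Lemma sum_edge_weight x : \sum_j edge_weight x j = k%:R.
Proof.
rewrite sumrB sum_bananaBT_mul subr0 sumr_const card_ord -[_ *+ _]mulr_natr.
by rewrite mulfVK // pnatr_eq0.
Qed.

Lemma qform_edge_weight x : qform (bananaQ g) x = \sum_j edge_weight x j ^+ 2 - k%:R * K.
Proof.
have expand j : edge_weight x j ^+ 2 = K * edge_weight x j - K * (BT x) j 0 + (BT x) j 0 ^+ 2.
  by rewrite /edge_weight; ring.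
rewrite (eq_bigr _ (fun j _ => expand j)) !big_split /= sumrN -!mulr_sumr.
by rewrite sum_edge_weight sum_bananaBT_mul qform_bananaQ; ring.
Qed.

Lemma edge_weight_sub x (c : 'cV[int]_g) j :
  edge_weight (x - map_mx intr c) j = edge_weight x j + (((bananaB g)^T *m c) j 0)%:~R.
Proof.
have map_BTc : BT (map_mx intr c) = map_mx intr ((bananaB g)^T *m c) :> 'cV[rat]_g.+1.
  by rewrite map_mxM map_trmx.
by rewrite /edge_weight mulmxBr map_BTc !mxE opprD opprK addrA.
Qed.

Hypotheses (k_gt0 : (0 < k)%N) (k_le_g : (k <= g)%N).

Lemma in_bracketE x :
  in_bracket k x <-> forall j, edge_weight x j = 0 \/ edge_weight x j = 1.
Proof.
have top : (g.+1 - k)%:R / g.+1%:R = 1 - K.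
  by rewrite natrB 1?leqW // mulrBl divff // pnatr_eq0.
have coord_lift i r : (x i 0 == r - K) = (edge_weight x (lift ord0 i) == r).
  by rewrite edge_weight_lift -subr_eq opprK.
have lift01 : (forall i, x i 0 = - K \/ x i 0 = (g.+1 - k)%:R / g.+1%:R) <->
    (forall i, edge_weight x (lift ord0 i) = 0 \/ edge_weight x (lift ord0 i) = 1).
  rewrite top; split=> x01 i; case: (x01 i) => e; [left | right | left | right]; apply/eqP.
  - by rewrite -coord_lift sub0r e.
  - by rewrite -coord_lift e.
  - by rewrite -sub0r coord_lift e.
  - by rewrite coord_lift e.
have card_top : (forall i, edge_weight x (lift ord0 i) = 0 \/ edge_weight x (lift ord0 i) = 1) ->
    #|[set i | x i 0 == (g.+1 - k)%:R / g.+1%:R]|%:R + edge_weight x ord0 = k%:R.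
  move=> w01.
  have -> : [set i | x i 0 == (g.+1 - k)%:R / g.+1%:R] =
            [set i : 'I_g | edge_weight x (lift ord0 i) == 1].
    by apply/setP => i; rewrite !inE top coord_lift.
  by rewrite card_set_eq1 // -(sum_edge_weight x) big_ord_recl addrC.
have kS : k%:R = k.-1%:R + 1 :> rat by rewrite natr1 prednK.
split=> [[/lift01 x01 m01] j | w01].
  case: (unliftP ord0 j) => [i ->|->]; first exact: x01.
  by move: (card_top x01); case: m01 => ->; [left | right]; lra.
have x01 i := w01 (lift ord0 i).
split=> [|/=]; first exact/lift01.
move: (card_top x01); case: (w01 ord0) => -> card_eq; [left | right];
  by apply/eqP; rewrite -(eqr_nat rat); apply/eqP; lra.
Qed.

Lemma svec_edge_weight x : in_bracket k x -> forall j, (svec x j)%:~R = edge_weight x j.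
Proof.
move=> /in_bracketE x01 j.
have BT_edge_weight : BT x j 0 = K - edge_weight x j by rewrite /edge_weight subKr.
have K_gt0 : 0 < K by rewrite divr_gt0 ?ltr0n.
have K_lt1 : K < 1 by rewrite ltr_pdivrMr ?ltr0n // mul1r ltr_nat ltnS.
rewrite /svec BT_edge_weight; case: (x01 j) => ->.
  by rewrite subr0 K_gt0.
by rewrite subr_gt0 ltNge (ltW K_lt1).
Qed.

Section DelaunaySet.

Variable a : 'cV[rat]_g.
Hypothesis a_bracket : in_bracket k a.

Definition edge_indicator (c : 'cV[int]_g) (j : 'I_g.+1) : int :=
  ((bananaB g)^T *m c) j 0 + svec a j.

Lemma edge_weight_sub_indicator c j :
  edge_weight (a - map_mx intr c) j = (edge_indicator c j)%:~R.
Proof. by rewrite edge_weight_sub -svec_edge_weight // intrD addrC. Qed.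

Lemma edge_indicator_lift c i :
  edge_indicator c (lift ord0 i) = svec a (lift ord0 i) - c i 0.
Proof. by rewrite /edge_indicator -map_bananaB_int bananaBT_mul_lift addrC. Qed.

Lemma sum_edge_indicator c : \sum_j edge_indicator c j = k.
Proof.
apply: (@intr_inj rat); rewrite rmorph_sum /=.
by rewrite -(eq_bigr _ (fun j _ => edge_weight_sub_indicator c j)) sum_edge_weight.
Qed.

Lemma in_delaunayE c :
  in_delaunay (bananaQ g) a c <-> forall j, edge_indicator c j = 0 \/ edge_indicator c j = 1.
Proof.
have sqr01 (R : pzRingType) (z : R) : z = 0 \/ z = 1 -> z ^+ 2 = z.
  by case=> ->; rewrite ?expr0n ?expr1n.
have qform_a : qform (bananaQ g) a = k%:R - k%:R * K.
  have a01 := (in_bracketE a).1 a_bracket.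
  by rewrite qform_edge_weight (eq_bigr _ (fun j _ => sqr01 _ _ (a01 j))) sum_edge_weight.
have sum_sqr : \sum_j edge_weight (a - map_mx intr c) j ^+ 2 = (\sum_j edge_indicator c j ^+ 2)%:~R.
  by rewrite rmorph_sum; apply: eq_bigr => j _; rewrite edge_weight_sub_indicator rmorphXn.
rewrite /in_delaunay qform_a qform_edge_weight sum_sqr; split=> [/addIr sum_sqr_k | c01].
  by apply: sum_sqr_eq_sum_01; rewrite sum_edge_indicator; apply: (@intr_inj rat); rewrite -sum_sqr_k.
by rewrite (eq_bigr _ (fun j _ => sqr01 _ _ (c01 j))) sum_edge_indicator.
Qed.

Lemma in_delaunay_bracket c :
  in_delaunay (bananaQ g) a c <-> in_bracket k (a - map_mx intr c).
Proof.
have intr01 (z : int) : z%:~R = 0 :> rat \/ z%:~R = 1 :> rat <-> z = 0 \/ z = 1.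
  by split; case=> e; [left | right | left | right]; rewrite ?e //; apply: (@intr_inj rat); rewrite e.
rewrite in_delaunayE in_bracketE.
split=> c01 j; first by rewrite edge_weight_sub_indicator; apply/intr01.
by apply/intr01; rewrite -edge_weight_sub_indicator.
Qed.

Lemma card_edge_support c :
  in_delaunay (bananaQ g) a c -> #|[set j | edge_indicator c j == 1]| = k.
Proof. by move=> /in_delaunayE /card_set_eq1; rewrite sum_edge_indicator natz => -[]. Qed.

Lemma edge_support_is_basis c :
  in_delaunay (bananaQ g) a c -> is_basis k a [set j | edge_indicator c j == 1].
Proof.
move=> c_del; split; first exact: card_edge_support.
by exists c; split=> // j; rewrite inE => /eqP.
Qed.

Lemma delaunay_bracket_bijective :
  exists f : {c : 'cV[int]_g | in_delaunay (bananaQ g) a c} ->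
             {x : 'cV[rat]_g | in_bracket k x}, bijective f.
Proof.
exists (fun c => exist (in_bracket k) _ ((in_delaunay_bracket _).1 (svalP c))).
apply: bijective_of_inj_surj => [[c c_del] [c' c'_del] /(congr1 sval) /= eq_sub | [x x_bracket]].
  apply: sval_inj; apply/matrixP => i j.
  by move/matrixP/(_ i j): (oppr_inj (addrI _ eq_sub)); rewrite !mxE => /intr_inj.
pose c := \col_i (svec a (lift ord0 i) - svec x (lift ord0 i)).
have a_sub_c : a - map_mx intr c = x.
  apply/matrixP => i j; rewrite (ord1 j) !mxE intrB !svec_edge_weight //.
  by rewrite !edge_weight_lift; ring.
have c_del : in_delaunay (bananaQ g) a c by apply/in_delaunay_bracket; rewrite a_sub_c.
by exists (exist _ c c_del); apply: sval_inj.
Qed.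

Lemma delaunay_basis_bijective :
  exists h : {c : 'cV[int]_g | in_delaunay (bananaQ g) a c} ->
             {I : {set 'I_g.+1} | is_basis k a I}, bijective h.
Proof.
exists (fun c => exist (is_basis k a) _ (edge_support_is_basis (svalP c))).
apply: bijective_of_inj_surj => [[c c_del] [c' c'_del] /(congr1 sval) /= eq_supp |].
  apply: sval_inj; apply/matrixP => i j; rewrite (ord1 j) /=.
  have := (in_delaunayE c).1 c_del (lift ord0 i).
  have := (in_delaunayE c').1 c'_del (lift ord0 i).
  move/setP: eq_supp => /(_ (lift ord0 i)); rewrite !inE !edge_indicator_lift.
  lia.
move=> [I [card_I [c [c_del c_I]]]]; exists (exist _ c c_del); apply: sval_inj => /=.
apply/eqP; rewrite eq_sym eqEcard card_I card_edge_support // leqnn andbT.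
by apply/subsetP => j /c_I; rewrite inE /edge_indicator => ->.
Qed.

End DelaunaySet.

End BananaGraph.

Theorem theorem3p12 (g k : nat) (hg : (1 <= g)%N) (hk1 : (1 <= k)%N)
    (hkg : (k <= g)%N) (a : 'cV[rat]_g) (ha : in_bracket k a) :
  (exists f : {c : 'cV[int]_g | in_delaunay (bananaQ g) a c} ->
              {x : 'cV[rat]_g | in_bracket k x}, bijective f) /\
  (exists h : {c : 'cV[int]_g | in_delaunay (bananaQ g) a c} ->
              {I : {set 'I_g.+1} | is_basis k a I}, bijective h).
Proof.
(* [hg] is implied by [hk1] and [hkg]. *)
by split; [apply: delaunay_bracket_bijective | apply: delaunay_basis_bijective].
Qed.
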